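(* Let $X$ be a topological space in which every open set is a union of countably many clopen sets. The following are equivalent: (1) every Borel image of $X$ in $\mathbb{N}^{\mathbb{N}}$ is bounded; (2) $C_p(X)$ is an $\alpha_1$ space; (3) $B_p(X)$ is an $\alpha_1$ space; (4) $B_p(X)$ is an $\alpha_2$ space; (5) $B_p(X)$ is an $\alpha_3$ space; (6) $B_p(X)$ is an $\alpha_4$ space.
   Context: $C_p(X)$ (resp. $B_p(X)$) is the space of continuous (resp. Borel) real-valued functions on $X$ with the topology of pointwise convergence. A countable set $A$ of distinct points converges to $y$ if some (every) bijective enumeration of it does. For a space $Y$, a point $y$, and any sequence $A_1,A_2,\dots$ of countably infinite sets each converging to $y$: $Y$ is $\alpha_1$ if always there are cofinite $B_n\subseteq A_n$ with $\bigcup_nB_n$ converging to $y$; $\alpha_2$ if always there are $a_n\in A_n$ such that $\{a_n:n\in\mathbb{N}\}$ is infinite and converges to $y$ (i.e., $\mathsf{S}_1(\Gamma_y,\Gamma_y)$); $\alpha_3$ if always there is a countably infinite $B$ converging to $y$ such that $B\cap A_n$ is infinite for infinitely many $n$; $\alpha_4$ if always there is a countably infinite $B$ converging to $y$ such that $B\cap A_n\neq\emptyset$ for infinitely many $n$. $Y\subseteq\mathbb{N}^{\mathbb{N}}$ is bounded if some $g\in\mathbb{N}^{\mathbb{N}}$ satisfies $f(n)\le g(n)$ for all but finitely many $n$, for each $f\in Y$. A Borel image of $X$ is $\Psi[X]$ for a Borel measurable $\Psi$. *)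

From Stdlib Require Import Reals List.
Open Scope R_scope.

Definition is_topology {X : Type} (T : (X -> Prop) -> Prop) : Prop :=
  T (fun _ => True) /\
  T (fun _ => False) /\
  (forall U V, T U -> T V -> T (fun x => U x /\ V x)) /\
  (forall F : (X -> Prop) -> Prop, (forall U, F U -> T U) ->
      T (fun x => exists U, F U /\ U x)).

Definition is_closed {X : Type} (T : (X -> Prop) -> Prop) (C : X -> Prop) : Prop :=
  T (fun x => ~ C x).

Definition is_clopen {X : Type} (T : (X -> Prop) -> Prop) (C : X -> Prop) : Prop :=
  T C /\ is_closed T C.

Definition open_countable_union_clopen {X : Type} (T : (X -> Prop) -> Prop) : Prop :=
  forall U, T U -> exists C : nat -> (X -> Prop),
    (forall n, is_clopen T (C n)) /\ (forall x, U x <-> exists n, C n x).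

Definition is_sigma_algebra {X : Type} (S : (X -> Prop) -> Prop) : Prop :=
  S (fun _ => True) /\
  (forall A, S A -> S (fun x => ~ A x)) /\
  (forall A : nat -> (X -> Prop), (forall n, S (A n)) -> S (fun x => exists n, A n x)).

Definition borel {X : Type} (T : (X -> Prop) -> Prop) (A : X -> Prop) : Prop :=
  forall S, is_sigma_algebra S -> (forall U, T U -> S U) -> S A.

Definition borel_measurable {X Y : Type} (TX : (X -> Prop) -> Prop)
  (TY : (Y -> Prop) -> Prop) (f : X -> Y) : Prop :=
  forall V, TY V -> borel TX (fun x => V (f x)).

Definition continuous_map {X Y : Type} (TX : (X -> Prop) -> Prop)
  (TY : (Y -> Prop) -> Prop) (f : X -> Y) : Prop :=
  forall V, TY V -> TX (fun x => V (f x)).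

Definition R_open (U : R -> Prop) : Prop :=
  forall x, U x -> exists eps, eps > 0 /\ forall y, Rabs (y - x) < eps -> U y.

Definition baire_open (U : (nat -> nat) -> Prop) : Prop :=
  forall f, U f -> exists n, forall g, (forall k, (k < n)%nat -> g k = f k) -> U g.

Definition pw_open {X : Type} (U : (X -> R) -> Prop) : Prop :=
  forall f, U f -> exists (xs : list X) (eps : R), eps > 0 /\
    forall g, (forall x, In x xs -> Rabs (g x - f x) < eps) -> U g.

Definition pw_sub_open {X : Type} (P : (X -> R) -> Prop)
  (W : {f : X -> R | P f} -> Prop) : Prop :=
  exists U, pw_open U /\ forall g, W g <-> U (proj1_sig g).

Definition Cp_carrier {X : Type} (TX : (X -> Prop) -> Prop) : Type :=
  {f : X -> R | continuous_map TX R_open f}.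
Definition Cp_open {X : Type} (TX : (X -> Prop) -> Prop) :
  (Cp_carrier TX -> Prop) -> Prop :=
  pw_sub_open (fun f => continuous_map TX R_open f).

Definition Bp_carrier {X : Type} (TX : (X -> Prop) -> Prop) : Type :=
  {f : X -> R | borel_measurable TX R_open f}.
Definition Bp_open {X : Type} (TX : (X -> Prop) -> Prop) :
  (Bp_carrier TX -> Prop) -> Prop :=
  pw_sub_open (fun f => borel_measurable TX R_open f).

Definition seq_conv {Y : Type} (T : (Y -> Prop) -> Prop) (s : nat -> Y) (y : Y) : Prop :=
  forall U, T U -> U y -> exists N, forall n, (N <= n)%nat -> U (s n).

(** A countable set of distinct points converges to y if some bijective
    enumeration of it converges to y (this forces the set to be countably infinite). *)
Definition set_conv {Y : Type} (T : (Y -> Prop) -> Prop) (A : Y -> Prop) (y : Y) : Prop :=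
  exists e : nat -> Y,
    (forall m n, e m = e n -> m = n) /\
    (forall z, A z <-> exists n, e n = z) /\
    seq_conv T e y.

Definition finite_set {Y : Type} (A : Y -> Prop) : Prop :=
  exists l : list Y, forall z, A z -> In z l.

Definition infinite_set {Y : Type} (A : Y -> Prop) : Prop := ~ finite_set A.

Definition alpha1 {Y : Type} (T : (Y -> Prop) -> Prop) : Prop :=
  forall (y : Y) (A : nat -> (Y -> Prop)), (forall n, set_conv T (A n) y) ->
    exists B : nat -> (Y -> Prop),
      (forall n z, B n z -> A n z) /\
      (forall n, finite_set (fun z => A n z /\ ~ B n z)) /\
      set_conv T (fun z => exists n, B n z) y.

Definition alpha2 {Y : Type} (T : (Y -> Prop) -> Prop) : Prop :=
  forall (y : Y) (A : nat -> (Y -> Prop)), (forall n, set_conv T (A n) y) ->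
    exists a : nat -> Y,
      (forall n, A n (a n)) /\
      infinite_set (fun z => exists n, a n = z) /\
      set_conv T (fun z => exists n, a n = z) y.

Definition alpha3 {Y : Type} (T : (Y -> Prop) -> Prop) : Prop :=
  forall (y : Y) (A : nat -> (Y -> Prop)), (forall n, set_conv T (A n) y) ->
    exists B : Y -> Prop,
      set_conv T B y /\
      forall N, exists n, (N <= n)%nat /\ infinite_set (fun z => B z /\ A n z).

Definition alpha4 {Y : Type} (T : (Y -> Prop) -> Prop) : Prop :=
  forall (y : Y) (A : nat -> (Y -> Prop)), (forall n, set_conv T (A n) y) ->
    exists B : Y -> Prop,
      set_conv T B y /\
      forall N, exists n, (N <= n)%nat /\ exists z, B z /\ A n z.

Definition bounded_baire (Y : (nat -> nat) -> Prop) : Prop :=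
  exists g : nat -> nat, forall f, Y f -> exists N, forall n, (N <= n)%nat -> (f n <= g n)%nat.

Definition borel_images_bounded {X : Type} (TX : (X -> Prop) -> Prop) : Prop :=
  forall Psi : X -> (nat -> nat), borel_measurable TX baire_open Psi ->
    bounded_baire (fun f => exists x, Psi x = f).

From Stdlib Require Import Reals List.
From Stdlib Require Import Lra Lia ClassicalEpsilon FunctionalExtensionality
  PropExtensionality Cantor FinFun Wf_nat.
Open Scope R_scope.

(* If every Borel image of X in N^N is bounded, alpha_1 holds in any space of
   Borel functions: for sequences e_n converging pointwise to f, the map sending
   x to the sequence of convergence moduli of the e_n at x is Borel, and a bound
   h on its image makes the tails {e_n k | k >= h n} converge jointly to f.
   Conversely, a Borel map Psi : X -> N^N is encoded by indicators of the sets
   {x | k <= Psi x i for some i <= n}, shifted by distinct small constants so that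
   the n-th family is a set of distinct functions converging to 0; any set
   converging to 0 contains, at each point x, only finitely many of these
   functions taking a value >= 1 at x, so the indices k selected by alpha_4
   eventually dominate Psi x.  For C_p(X) the sets must be clopen: alpha_1 in
   C_p(X) makes the pointwise limits of sequences of clopen sets a sigma-algebra,
   which contains the open sets by the hypothesis on X, and a diagonal argument
   replaces countably many such limits by clopen sets that are correct at each
   point for almost all indices. *)

Lemma pred_ext {X : Type} (P : (X -> Prop) -> Prop) (U V : X -> Prop) :
  (forall x, U x <-> V x) -> P U -> P V.
Proof.
  intros H HU. replace V with U; auto.
  apply functional_extensionality; intro x; apply propositional_extensionality; auto.
Qed.

Lemma exists_least_nat (P : nat -> Prop) :
  (exists n, P n) -> exists n, P n /\ forall m, P m -> (n <= m)%nat.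
Proof.
  intros [n Hn]. revert Hn. induction n as [n IH] using (well_founded_induction lt_wf).
  intro Hn. destruct (classic (exists m, (m < n)%nat /\ P m)) as [[m [Hm Pm]]|H].
  - exact (IH m Hm Pm).
  - exists n; split; auto. intros m Pm. apply Nat.nlt_ge. eauto.
Qed.

Definition eventually (P : nat -> Prop) : Prop :=
  exists N, forall n, (N <= n)%nat -> P n.

Lemma eventually_mono (P Q : nat -> Prop) :
  eventually P -> (forall n, P n -> Q n) -> eventually Q.
Proof. intros [N HN] H. exists N. auto. Qed.

Lemma eventually_forall_list {A : Type} (xs : list A) (R : A -> nat -> Prop) :
  (forall x, In x xs -> eventually (R x)) ->
  eventually (fun n => forall x, In x xs -> R x n).
Proof.
  induction xs as [|a xs IH]; intros H.
  - exists 0%nat. intros n _ x [].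
  - destruct (H a (or_introl eq_refl)) as [N1 H1].
    destruct IH as [N2 H2]. { intros x Hx; apply H; right; auto. }
    exists (Nat.max N1 N2). intros n Hn x [<-|Hx]; [apply H1|apply H2; auto]; lia.
Qed.

Lemma eventually_forall_lt (N : nat) (R : nat -> nat -> Prop) :
  (forall i, (i < N)%nat -> eventually (R i)) ->
  eventually (fun n => forall i, (i < N)%nat -> R i n).
Proof.
  intros H. apply (eventually_mono (fun n => forall i, In i (seq 0 N) -> R i n)).
  - apply eventually_forall_list. intros i Hi. apply H. apply in_seq in Hi. lia.
  - intros n Hn i Hi. apply Hn, in_seq. lia.
Qed.

Lemma strictly_increasing_lt (idx : nat -> nat) :
  (forall n, (idx n < idx (S n))%nat) -> forall m n, (m < n)%nat -> (idx m < idx n)%nat.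
Proof.
  intros H m n Hmn. induction Hmn as [|n Hmn IH]; [apply H|]. specialize (H n). lia.
Qed.

Lemma strictly_increasing_injective (idx : nat -> nat) :
  (forall n, (idx n < idx (S n))%nat) -> forall m n, idx m = idx n -> m = n.
Proof.
  intros H m n E. destruct (Nat.lt_trichotomy m n) as [Hmn|[Hmn|Hmn]]; auto;
    apply (strictly_increasing_lt idx H) in Hmn; lia.
Qed.

Lemma increasing_choice (P : nat -> nat -> Prop) :
  (forall n p, exists j, (p <= j)%nat /\ P n j) ->
  exists idx, (forall n, P n (idx n)) /\ forall n, (idx n < idx (S n))%nat.
Proof.
  intros H.
  destruct (choice (fun (np : nat * nat) j => (snd np <= j)%nat /\ P (fst np) j))
    as [pick Hpick].
  { intros [n p]. apply H. }
  set (idx := fix idx n := match n with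
                           | O => pick (0, 0)%nat
                           | S n => pick (S n, S (idx n)) end).
  exists idx. split.
  - intros [|n]; apply (Hpick (_, _)).
  - intros n. apply (Hpick (S n, S (idx n))).
Qed.

Lemma infinite_nat_enum (I : nat -> Prop) :
  (forall N, exists n, (N <= n)%nat /\ I n) ->
  exists idx, (forall k, (idx k < idx (S k))%nat) /\ forall n, I n <-> exists k, idx k = n.
Proof.
  intros Hinf.
  destruct (choice (fun p n => ((p <= n)%nat /\ I n) /\
                               forall m, (p <= m)%nat /\ I m -> (n <= m)%nat)) as [next Hnext].
  { intros p. apply exists_least_nat, Hinf. }
  set (idx := fix idx k := match k with O => next O | S k => next (S (idx k)) end).
  assert (HI : forall k, I (idx k)) by (intros [|k]; apply Hnext).
  assert (Hlt : forall k, (idx k < idx (S k))%nat) by (intros k; apply (Hnext (S (idx k)))).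
  exists idx. split; [exact Hlt|]. intros n. split; [|intros [k <-]; apply HI].
  intros HIn.
  assert (Hreach : forall d k, (n - idx k <= d)%nat -> (idx k <= n)%nat -> exists k', idx k' = n).
  { induction d; intros k Hd Hk.
    - exists k. lia.
    - destruct (Nat.eq_dec (idx k) n) as [E|E]; [exists k; auto|].
      apply (IHd (S k)); [specialize (Hlt k); lia|].
      apply (Hnext (S (idx k))). split; auto. lia. }
  apply (Hreach n 0%nat); [lia|]. apply (Hnext O). split; auto. lia.
Qed.

Section FiniteSets.
Context {Y : Type}.

Lemma finite_set_incl (A B : Y -> Prop) :
  (forall z, A z -> B z) -> finite_set B -> finite_set A.
Proof. intros H [l Hl]. exists l. auto. Qed.

Lemma finite_set_union (A B : Y -> Prop) :
  finite_set A -> finite_set B -> finite_set (fun z => A z \/ B z).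
Proof. intros [l1 H1] [l2 H2]. exists (l1 ++ l2). intros z [H|H]; apply in_or_app; auto. Qed.

Lemma finite_set_image_lt (e : nat -> Y) (N : nat) :
  finite_set (fun z => exists k, (k < N)%nat /\ e k = z).
Proof.
  exists (map e (seq 0 N)). intros z [k [Hk <-]]. apply in_map, in_seq. lia.
Qed.

Lemma finite_set_bunion (A : nat -> Y -> Prop) (N : nat) :
  (forall n, (n < N)%nat -> finite_set (A n)) ->
  finite_set (fun z => exists n, (n < N)%nat /\ A n z).
Proof.
  induction N as [|N IH]; intros H.
  - exists nil. intros z [n [Hn _]]. lia.
  - apply (finite_set_incl _ (fun z => (exists n, (n < N)%nat /\ A n z) \/ A N z)).
    + intros z [n [Hn Hz]]. destruct (Nat.eq_dec n N) as [->|E]; [right; auto|].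
      left. exists n. split; auto. lia.
    + apply finite_set_union; auto.
Qed.

Lemma injective_infinite (A : Y -> Prop) (e : nat -> Y) :
  (forall m n, e m = e n -> m = n) -> (forall k, A (e k)) -> infinite_set A.
Proof.
  intros Hinj HA [l Hl].
  assert (Hnd : NoDup (map e (seq 0 (S (length l))))).
  { apply Injective_map_NoDup; [exact Hinj|apply seq_NoDup]. }
  assert (Hincl : incl (map e (seq 0 (S (length l)))) l).
  { intros z Hz. apply in_map_iff in Hz. destruct Hz as [k [<- _]]. auto. }
  pose proof (NoDup_incl_length Hnd Hincl) as Hlen.
  rewrite length_map, length_seq in Hlen. lia.
Qed.

Lemma injective_eventually_notin (e : nat -> Y) (A : Y -> Prop) :
  (forall m n, e m = e n -> m = n) -> finite_set A -> eventually (fun k => ~ A (e k)).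
Proof.
  intros Hinj [l Hl].
  assert (Hlist : eventually (fun k => ~ In (e k) l)).
  { clear Hl. induction l as [|a l [N HN]].
    - exists 0%nat. intros k _ [].
    - destruct (classic (exists k, e k = a)) as [[ka Hka]|Hna].
      + exists (Nat.max N (S ka)). intros k Hk [E|E].
        * subst a. apply Hinj in E. lia.
        * apply (HN k); auto. lia.
      + exists N. intros k Hk [E|E]; [eauto|]. exact (HN k Hk E). }
  apply (eventually_mono _ _ Hlist (fun k H Ak => H (Hl _ Ak))).
Qed.

Lemma cofinite_subset_infinite (A B : Y -> Prop) :
  infinite_set A -> (forall z, B z -> A z) ->
  finite_set (fun z => A z /\ ~ B z) -> infinite_set B.
Proof.
  intros HA HBA [l' Hl'] [l Hl]. apply HA. exists (l ++ l').
  intros z Az. apply in_or_app. destruct (classic (B z)); auto.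
Qed.

End FiniteSets.

Section SetConvergence.
Context {Y : Type} (T : (Y -> Prop) -> Prop).

Lemma set_conv_finite_outside (A : Y -> Prop) y : set_conv T A y ->
  forall U, T U -> U y -> finite_set (fun z => A z /\ ~ U z).
Proof.
  intros [e [_ [Hr Hc]]] U HU Uy. destruct (Hc U HU Uy) as [N HN].
  apply (finite_set_incl _ (fun z => exists k, (k < N)%nat /\ e k = z));
    [|apply finite_set_image_lt].
  intros z [Az nU]. apply Hr in Az. destruct Az as [k <-]. exists k. split; auto.
  apply Nat.nle_gt. intros Hk. exact (nU (HN k Hk)).
Qed.

Lemma set_conv_infinite (A : Y -> Prop) y : set_conv T A y -> infinite_set A.
Proof.
  intros [e [Hinj [Hr _]]]. apply (injective_infinite A e Hinj). intros k. apply Hr. eauto.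
Qed.

Lemma set_conv_cofinite_infinite (y : Y) (A B : Y -> Prop) :
  set_conv T A y -> (forall z, B z -> A z) ->
  finite_set (fun z => A z /\ ~ B z) -> infinite_set B.
Proof.
  intros HA. apply cofinite_subset_infinite. apply (set_conv_infinite A y HA).
Qed.

Lemma set_conv_intro (A : Y -> Prop) y :
  (exists u : nat -> Y, forall z, A z -> exists n, u n = z) -> infinite_set A ->
  (forall U, T U -> U y -> finite_set (fun z => A z /\ ~ U z)) -> set_conv T A y.
Proof.
  intros [u Hu] Hinf Hout.
  set (I := fun n => A (u n) /\ forall m, (m < n)%nat -> u m <> u n).
  assert (Hfirst : forall z, A z -> exists n, I n /\ u n = z).
  { intros z Hz. destruct (exists_least_nat (fun n => u n = z) (Hu z Hz)) as [n [Hn Hmin]].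
    exists n. repeat split; auto; [now rewrite Hn|].
    intros m Hm E. rewrite Hn in E. apply Hmin in E. lia. }
  assert (HIinf : forall N, exists n, (N <= n)%nat /\ I n).
  { intros N. apply NNPP. intros Hfin. apply Hinf.
    apply (finite_set_incl _ (fun z => exists k, (k < N)%nat /\ u k = z));
      [|apply finite_set_image_lt].
    intros z Hz. destruct (Hfirst z Hz) as [n [HIn Hn]]. exists n. split; auto.
    apply Nat.nle_gt. intros HNn. eauto. }
  destruct (infinite_nat_enum I HIinf) as [idx [Hlt HI]].
  assert (Hinj : forall m n, u (idx m) = u (idx n) -> m = n).
  { intros m n E. destruct (Nat.lt_trichotomy m n) as [Hmn|[Hmn|Hmn]]; auto; exfalso;
      apply (strictly_increasing_lt idx Hlt) in Hmn.
    - apply (proj2 (proj2 (HI _) (ex_intro _ n eq_refl)) (idx m)); auto.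
    - apply (proj2 (proj2 (HI _) (ex_intro _ m eq_refl)) (idx n)); auto. }
  exists (fun k => u (idx k)). split; [exact Hinj|split].
  - intros z. split.
    + intros Hz. destruct (Hfirst z Hz) as [n [HIn <-]].
      destruct (proj1 (HI n) HIn) as [k <-]. eauto.
    + intros [k <-]. apply (HI (idx k)). eauto.
  - intros U HU Uy.
    destruct (injective_eventually_notin _ _ Hinj (Hout U HU Uy)) as [N HN].
    exists N. intros k Hk. apply NNPP. intros nU. apply (HN k Hk). split; auto.
    apply (HI (idx k)). eauto.
Qed.

Lemma set_conv_subset (A A' : Y -> Prop) y :
  set_conv T A y -> (forall z, A' z -> A z) -> infinite_set A' -> set_conv T A' y.
Proof.
  intros HA Hsub Hinf. apply set_conv_intro; auto.
  - destruct HA as [e [_ [Hr _]]]. exists e. intros z Hz. apply Hr; auto.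
  - intros U HU Uy. apply (finite_set_incl _ (fun z => A z /\ ~ U z)).
    + intros z [Hz nU]. auto.
    + apply (set_conv_finite_outside A y HA U HU Uy).
Qed.

Lemma set_conv_cunion (A B : nat -> Y -> Prop) y :
  (forall n, set_conv T (A n) y) -> (forall n z, B n z -> A n z) ->
  (exists u : nat -> Y, forall z, (exists n, B n z) -> exists m, u m = z) ->
  infinite_set (fun z => exists n, B n z) ->
  (forall U, T U -> U y -> eventually (fun n => forall z, B n z -> U z)) ->
  set_conv T (fun z => exists n, B n z) y.
Proof.
  intros HA HBA Hcount Hinf Htail. apply set_conv_intro; auto.
  intros U HU Uy. destruct (Htail U HU Uy) as [N HN].
  apply (finite_set_incl _ (fun z => exists n, (n < N)%nat /\ (A n z /\ ~ U z))).
  - intros z [[n Bz] nU]. exists n. split; [|auto].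
    apply Nat.nle_gt. intros Hn. exact (nU (HN n Hn z Bz)).
  - apply finite_set_bunion. intros n _. apply (set_conv_finite_outside _ y); auto.
Qed.

End SetConvergence.

Section AlphaImplications.
Context {Y : Type} (T : (Y -> Prop) -> Prop).

Lemma alpha1_alpha3 : alpha1 T -> alpha3 T.
Proof.
  intros H1 y A HA. destruct (H1 y A HA) as [B [HBA [Hfin Hc]]].
  exists (fun z => exists n, B n z). split; auto. intros N. exists N. split; auto.
  intros Hfin'. apply (set_conv_cofinite_infinite T y (A N) (B N) (HA N) (HBA N) (Hfin N)).
  apply (finite_set_incl _ _ (fun z Bz => conj (ex_intro _ N Bz) (HBA N z Bz)) Hfin').
Qed.

Lemma alpha3_alpha4 : alpha3 T -> alpha4 T.
Proof.
  intros H3 y A HA. destruct (H3 y A HA) as [B [Hc HB]]. exists B. split; auto.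
  intros N. destruct (HB N) as [n [Hn Hinf]]. exists n. split; auto.
  apply NNPP. intros Hnone. apply Hinf. exists nil. intros z Hz. apply Hnone. eauto.
Qed.

Lemma alpha2_alpha4 : alpha2 T -> alpha4 T.
Proof.
  intros H2 y A HA. destruct (H2 y A HA) as [a [Ha [_ Hc]]].
  exists (fun z => exists n, a n = z). split; auto. intros N. exists N. split; auto.
  exists (a N). eauto.
Qed.

Lemma alpha1_alpha2 : alpha1 T -> alpha2 T.
Proof.
  intros H1 y A HA. destruct (H1 y A HA) as [B [HBA [Hfin Hc]]].
  pose proof Hc as [s [Hsinj [Hsr _]]].
  assert (Hcofinal : forall n p, exists j, (p <= j)%nat /\ B n (s j)).
  { intros n p. apply NNPP. intros Hnone.
    apply (set_conv_cofinite_infinite T y (A n) (B n) (HA n) (HBA n) (Hfin n)).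
    apply (finite_set_incl _ (fun z => exists k, (k < p)%nat /\ s k = z));
      [|apply finite_set_image_lt].
    intros z Bz. destruct (proj1 (Hsr z) (ex_intro _ n Bz)) as [j <-].
    exists j. split; auto. apply Nat.nle_gt. eauto. }
  destruct (increasing_choice (fun n j => B n (s j)) Hcofinal) as [idx [HB Hlt]].
  assert (Hinj : forall m n, s (idx m) = s (idx n) -> m = n).
  { intros m n E. apply (strictly_increasing_injective idx Hlt), Hsinj, E. }
  assert (Hinf : infinite_set (fun z => exists n, s (idx n) = z)).
  { apply (injective_infinite _ _ Hinj). eauto. }
  exists (fun n => s (idx n)). split; [|split]; auto.
  apply (set_conv_subset T _ _ y Hc); auto. intros z [n <-]. eauto.
Qed.

End AlphaImplications.

Section Borel.
Context {X : Type} (TX : (X -> Prop) -> Prop).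

Lemma borel_open U : TX U -> borel TX U.
Proof. intros HU S _ HS. auto. Qed.

Lemma borel_true : borel TX (fun _ => True).
Proof. intros S [H _] _. auto. Qed.

Lemma borel_compl A : borel TX A -> borel TX (fun x => ~ A x).
Proof. intros HA S HS HO. apply (proj1 (proj2 HS)), HA; auto. Qed.

Lemma borel_cunion (A : nat -> X -> Prop) :
  (forall n, borel TX (A n)) -> borel TX (fun x => exists n, A n x).
Proof. intros HA S HS HO. apply (proj2 (proj2 HS)). intros n. apply HA; auto. Qed.

Lemma borel_false : borel TX (fun _ => False).
Proof. apply (pred_ext _ (fun x => ~ True)); [tauto|]. apply borel_compl, borel_true. Qed.

Lemma borel_cinter (A : nat -> X -> Prop) :
  (forall n, borel TX (A n)) -> borel TX (fun x => forall n, A n x).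
Proof.
  intros HA. apply (pred_ext _ (fun x => ~ exists n, ~ A n x)).
  - intros x; split.
    + intros H n. apply NNPP. eauto.
    + intros H [n Hn]. eauto.
  - apply borel_compl, borel_cunion. intros n. apply borel_compl, HA.
Qed.

Lemma borel_inter2 A B : borel TX A -> borel TX B -> borel TX (fun x => A x /\ B x).
Proof.
  intros HA HB. apply (pred_ext _ (fun x => forall n, (if Nat.eqb n 0 then A else B) x)).
  - intros x; split.
    + intros H. exact (conj (H 0%nat) (H 1%nat)).
    + intros [Ha Hb] [|n]; simpl; auto.
  - apply borel_cinter. intros [|n]; simpl; auto.
Qed.

Lemma borel_const (p : Prop) : borel TX (fun _ => p).
Proof.
  destruct (classic p).
  - apply (pred_ext _ (fun _ => True)); [tauto|apply borel_true].
  - apply (pred_ext _ (fun _ => False)); [tauto|apply borel_false].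
Qed.

Lemma borel_imp (p : Prop) B : borel TX B -> borel TX (fun x => p -> B x).
Proof.
  intros HB. destruct (classic p).
  - apply (pred_ext _ B); [tauto|auto].
  - apply (pred_ext _ (fun _ => True)); [tauto|apply borel_true].
Qed.

Lemma borel_zunion (A : Z -> X -> Prop) :
  (forall z, borel TX (A z)) -> borel TX (fun x => exists z, A z x).
Proof.
  intros HA.
  set (zdiff := fun p : nat * nat => (Z.of_nat (fst p) - Z.of_nat (snd p))%Z).
  apply (pred_ext _ (fun x => exists n, A (zdiff (of_nat n)) x)).
  - intros x; split; [intros [n H]; eauto|].
    intros [z Hz]. exists (to_nat (Z.to_nat z, Z.to_nat (- z))).
    rewrite cancel_of_to. unfold zdiff; simpl.
    replace (Z.of_nat (Z.to_nat z) - Z.of_nat (Z.to_nat (- z)))%Z with z by lia. exact Hz.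
  - apply borel_cunion. auto.
Qed.

End Borel.

Lemma inv_succ_small (eps : R) :
  eps > 0 -> eventually (fun m => / (INR m + 1) < eps).
Proof.
  intros He. destruct (INR_archimed eps 1 He) as [m0 Hm0]. exists m0. intros m Hm.
  apply le_INR in Hm. pose proof (pos_INR m).
  apply (Rmult_lt_reg_l (INR m + 1)); [lra|]. rewrite Rinv_r by lra. nra.
Qed.

Lemma exists_grid_point_between (a c : R) :
  a < c -> exists (j : nat) (z : Z), a < IZR z / INR (S j) < c.
Proof.
  intros Hac. destruct (inv_succ_small (c - a)) as [j Hj]; [lra|].
  specialize (Hj j (le_n j)). rewrite <- S_INR in Hj.
  exists j. set (s := INR (S j)) in *. assert (Hs : 0 < s) by apply lt_0_INR, Nat.lt_0_succ.
  destruct (archimed (a * s)) as [Hup1 Hup2].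
  exists (up (a * s)).
  assert (E : IZR (up (a * s)) / s = a + (IZR (up (a * s)) - a * s) / s) by (field; lra).
  rewrite E. split.
  - assert (0 < (IZR (up (a * s)) - a * s) / s) by (apply Rdiv_lt_0_compat; lra). lra.
  - assert ((IZR (up (a * s)) - a * s) / s <= / s).
    { unfold Rdiv. rewrite <- (Rmult_1_l (/ s)) at 2.
      apply Rmult_le_compat_r; [left; apply Rinv_0_lt_compat|]; lra. }
    lra.
Qed.

Lemma R_open_lt (c : R) : R_open (fun r => r < c).
Proof. intros x Hx. exists (c - x). split; [lra|]. intros y Hy. apply Rabs_def2 in Hy. lra. Qed.

Lemma R_open_gt (c : R) : R_open (fun r => c < r).
Proof. intros x Hx. exists (x - c). split; [lra|]. intros y Hy. apply Rabs_def2 in Hy. lra. Qed.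

Lemma borel_sub_lt {X : Type} (TX : (X -> Prop) -> Prop) (f g : X -> R) (d : R) :
  borel_measurable TX R_open f -> borel_measurable TX R_open g ->
  borel TX (fun x => f x - g x < d).
Proof.
  intros Hf Hg.
  apply (pred_ext _ (fun x => exists j z,
            f x < IZR z / INR (S j) /\ IZR z / INR (S j) - d < g x)).
  - intros x. split.
    + intros [j [z [H1 H2]]]. lra.
    + intros H. destruct (exists_grid_point_between (f x) (g x + d)) as [j [z Hjz]]; [lra|].
      exists j, z. lra.
  - apply borel_cunion. intros j. apply borel_zunion. intros z. apply borel_inter2.
    + apply (Hf (fun r => r < _)), R_open_lt.
    + apply (Hg (fun r => _ < r)), R_open_gt.
Qed.

Lemma borel_dist {X : Type} (TX : (X -> Prop) -> Prop) (f g : X -> R) (d : R) :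
  borel_measurable TX R_open f -> borel_measurable TX R_open g ->
  borel TX (fun x => Rabs (f x - g x) < d).
Proof.
  intros Hf Hg. apply (pred_ext _ (fun x => f x - g x < d /\ g x - f x < d)).
  - intros x. split.
    + intros [H1 H2]. apply Rabs_def1; lra.
    + intros H. apply Rabs_def2 in H. lra.
  - apply borel_inter2; apply borel_sub_lt; auto.
Qed.

Lemma baire_open_initial_segment (W : (nat -> nat) -> Prop) (n : nat) :
  (forall g h, (forall k, (k < n)%nat -> g k = h k) -> W g -> W h) -> baire_open W.
Proof. intros HW g Wg. exists n. intros h Hh. apply (HW g); auto. intros k Hk. symmetry; auto. Qed.

Section BaireMeasurable.
Context {X : Type} (TX : (X -> Prop) -> Prop) (Psi : X -> nat -> nat)
  (Hcoord : forall n m, borel TX (fun x => Psi x n = m)).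

Definition update (g : nat -> nat) (n m : nat) : nat -> nat :=
  fun k => if Nat.eqb k n then m else g k.

Lemma borel_initial_segment_property (n : nat) (Q : (nat -> nat) -> Prop) :
  (forall g h, (forall k, (k < n)%nat -> g k = h k) -> Q g -> Q h) ->
  borel TX (fun x => Q (Psi x)).
Proof.
  revert Q. induction n as [|n IH]; intros Q HQ.
  - apply (pred_ext _ (fun _ => Q (fun _ => 0%nat))).
    + intros x; split; apply HQ; intros; lia.
    + apply borel_const.
  - assert (Hupd : forall g m, g n = m -> forall k, (k < S n)%nat -> update g n m k = g k).
    { intros g m Hgm k _. unfold update. destruct (Nat.eqb_spec k n); congruence. }
    apply (pred_ext _ (fun x => exists m, Psi x n = m /\ Q (update (Psi x) n m))).
    + intros x; split.
      * intros [m [E H]]. revert H. apply HQ. apply Hupd, E.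
      * intros H. exists (Psi x n). split; auto. revert H. apply HQ.
        intros k Hk. symmetry. apply Hupd; auto.
    + apply borel_cunion. intros m. apply borel_inter2; [apply Hcoord|].
      apply (IH (fun g => Q (update g n m))). intros g h Hgh. apply HQ.
      intros k Hk. unfold update. destruct (Nat.eqb_spec k n); auto. apply Hgh. lia.
Qed.

Lemma borel_measurable_baire_coords : borel_measurable TX baire_open Psi.
Proof.
  intros V HV.
  apply (pred_ext _ (fun x => exists n,
            forall g, (forall k, (k < n)%nat -> g k = Psi x k) -> V g)).
  - intros x; split; [intros [n Hn]; apply Hn; auto|]. intros Vx. apply HV, Vx.
  - apply borel_cunion. intros n.
    apply (borel_initial_segment_property n
             (fun h => forall g, (forall k, (k < n)%nat -> g k = h k) -> V g)).
    intros h h' Hhh' H g Hg. apply H. intros k Hk. rewrite Hg, Hhh'; auto.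
Qed.

End BaireMeasurable.

Lemma borel_least_index {X : Type} (TX : (X -> Prop) -> Prop) (Q : nat -> nat -> X -> Prop) :
  (forall n m, borel TX (Q n m)) -> (forall n x, exists m, Q n m x) ->
  exists Psi : X -> nat -> nat, borel_measurable TX baire_open Psi /\ forall x n, Q n (Psi x n) x.
Proof.
  intros HQ Hex.
  destruct (choice (fun x (g : nat -> nat) => forall n,
                      Q n (g n) x /\ forall m, Q n m x -> (g n <= m)%nat)) as [Psi HPsi].
  { intros x. apply (choice (fun n m => Q n m x /\ forall m', Q n m' x -> (m <= m')%nat)).
    intros n. apply exists_least_nat, Hex. }
  exists Psi. split; [|apply HPsi].
  apply borel_measurable_baire_coords. intros n m.
  apply (pred_ext _ (fun x => Q n m x /\ forall m', (m' < m)%nat -> ~ Q n m' x)).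
  - intros x. destruct (HPsi x n) as [HQx Hleast]. split.
    + intros [Hm Hbelow]. apply Nat.le_antisymm; [apply Hleast, Hm|].
      apply Nat.nlt_ge. intros Hlt. exact (Hbelow _ Hlt HQx).
    + intros <-. split; auto. intros m' Hlt Hm'. apply Hleast in Hm'. lia.
  - apply borel_inter2; [apply HQ|]. apply borel_cinter. intros m'.
    apply borel_imp, borel_compl, HQ.
Qed.

Section PointwiseTopology.
Context {X : Type} (P : (X -> R) -> Prop).

Lemma pw_sub_open_coord_ball (f0 : X -> R) x eps :
  pw_sub_open P (fun g : {f | P f} => Rabs (proj1_sig g x - f0 x) < eps).
Proof.
  exists (fun h => Rabs (h x - f0 x) < eps). split; [|intros; tauto].
  intros h Hh. exists (x :: nil), (eps - Rabs (h x - f0 x)). split; [lra|].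
  intros g Hg. specialize (Hg x (or_introl eq_refl)).
  pose proof (Rabs_triang (g x - h x) (h x - f0 x)).
  replace (g x - h x + (h x - f0 x)) with (g x - f0 x) in H by ring. lra.
Qed.

Lemma seq_conv_pointwise (e : nat -> {f | P f}) (y : {f | P f}) :
  seq_conv (pw_sub_open P) e y -> forall x eps, eps > 0 ->
  eventually (fun n => Rabs (proj1_sig (e n) x - proj1_sig y x) < eps).
Proof.
  intros Hc x eps He. apply (Hc _ (pw_sub_open_coord_ball (proj1_sig y) x eps)).
  rewrite Rminus_diag, Rabs_R0. exact He.
Qed.

Lemma pw_sub_open_basic (U : {f | P f} -> Prop) (y : {f | P f}) :
  pw_sub_open P U -> U y -> exists xs eps, eps > 0 /\
    forall g, (forall x, In x xs -> Rabs (proj1_sig g x - proj1_sig y x) < eps) -> U g.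
Proof.
  intros [U' [HU' Hiff]] Uy. apply Hiff in Uy. destruct (HU' _ Uy) as [xs [eps [He H]]].
  exists xs, eps. split; auto. intros g Hg. apply Hiff. auto.
Qed.

End PointwiseTopology.

Lemma bounded_alpha1 {X : Type} (TX : (X -> Prop) -> Prop) (P : (X -> R) -> Prop) :
  (forall f, P f -> borel_measurable TX R_open f) ->
  borel_images_bounded TX -> alpha1 (pw_sub_open P).
Proof.
  intros HP Hbd y A HA.
  destruct (choice _ HA) as [e He].
  set (Q := fun n m x => forall j, Rabs (proj1_sig (e n (m + j)%nat) x - proj1_sig y x) < / (INR n + 1)).
  destruct (borel_least_index TX Q) as [Psi [HPsi HQPsi]].
  { intros n m. apply borel_cinter. intros j. apply borel_dist; apply HP, proj2_sig. }
  { intros n x. destruct (He n) as [_ [_ Hc]].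
    destruct (seq_conv_pointwise P (e n) y Hc x (/ (INR n + 1))) as [m Hm].
    { apply Rinv_0_lt_compat. pose proof (pos_INR n). lra. }
    exists m. intros j. apply Hm. lia. }
  destruct (Hbd Psi HPsi) as [h Hh].
  assert (HAe : forall n z, A n z <-> exists k, e n k = z) by (intros n; apply He).
  exists (fun n z => exists k, (h n <= k)%nat /\ e n k = z). split; [|split].
  - intros n z [k [_ <-]]. apply HAe. eauto.
  - intros n. apply (finite_set_incl _ (fun z => exists k, (k < h n)%nat /\ e n k = z));
      [|apply finite_set_image_lt].
    intros z [Az nB]. apply HAe in Az. destruct Az as [k <-]. exists k. split; auto.
    apply Nat.nle_gt. intros Hk. eauto.
  - apply (set_conv_cunion _ A); auto.
    + intros n z [k [_ <-]]. apply HAe. eauto.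
    + exists (fun m => e (fst (of_nat m)) (snd (of_nat m))).
      intros z [n [k [_ <-]]]. exists (to_nat (n, k)). rewrite cancel_of_to. reflexivity.
    + apply (injective_infinite _ (fun k => e 0%nat (h 0%nat + k)%nat)).
      * intros m n E. apply (proj1 (He 0%nat)) in E. lia.
      * intros k. exists 0%nat, (h 0%nat + k)%nat. split; auto. lia.
    + intros U HU Uy. destruct (pw_sub_open_basic P U y HU Uy) as [xs [eps [Heps Hball]]].
      destruct (eventually_forall_list xs (fun x n => (Psi x n <= h n)%nat)) as [N1 HN1].
      { intros x _. apply Hh. eauto. }
      destruct (inv_succ_small eps Heps) as [N2 HN2].
      exists (Nat.max N1 N2). intros n Hn z [k [Hk <-]]. apply Hball. intros x Hx.
      specialize (HN1 n ltac:(lia) x Hx).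
      specialize (HQPsi x n (k - Psi x n)%nat). replace (Psi x n + (k - Psi x n))%nat with k in HQPsi by lia.
      specialize (HN2 n ltac:(lia)). lra.
Qed.

(* The constant c, a different tag for each function of a family, keeps the
   functions pairwise distinct while letting them tend to 0 outside C. *)
Definition tagged_indicator {X : Type} (C : X -> Prop) (c : R) : X -> R :=
  fun x => (if excluded_middle_informative (C x) then 1 else 0) + c.

Definition tag (p : nat) : R := / (INR p + 2).

Lemma tag_bounds p : 0 < tag p <= / 2.
Proof.
  unfold tag. pose proof (pos_INR p). split.
  - apply Rinv_0_lt_compat. lra.
  - apply Rinv_le_contravar; lra.
Qed.

Lemma tag_inj p q : tag p = tag q -> p = q.
Proof.
  unfold tag. intros E. pose proof (pos_INR p). pose proof (pos_INR q).
  apply INR_eq. apply (f_equal Rinv) in E. rewrite !Rinv_inv in E. lra.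
Qed.

Lemma tag_small eps : eps > 0 -> eventually (fun p => tag p < eps).
Proof.
  intros He. apply (eventually_mono _ _ (inv_succ_small eps He)).
  intros p Hp. unfold tag. pose proof (pos_INR p).
  apply (Rle_lt_trans _ (/ (INR p + 1))); [apply Rinv_le_contravar|]; lra.
Qed.

Lemma tagged_indicator_preimage {X : Type} (F : (X -> Prop) -> Prop) (C : X -> Prop) c :
  F (fun _ => True) -> F (fun _ => False) -> F C -> F (fun x => ~ C x) ->
  forall V, F (fun x => V (tagged_indicator C c x)).
Proof.
  intros Htrue Hfalse HC HnC V. unfold tagged_indicator.
  destruct (classic (V (1 + c))), (classic (V (0 + c)));
    [apply (pred_ext _ (fun _ => True)) | apply (pred_ext _ C)
    | apply (pred_ext _ (fun x => ~ C x)) | apply (pred_ext _ (fun _ => False))]; auto;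
    intros x; destruct excluded_middle_informative; tauto.
Qed.

Lemma tagged_indicator_in {X : Type} (C : X -> Prop) c x : C x -> tagged_indicator C c x = 1 + c.
Proof. unfold tagged_indicator. destruct excluded_middle_informative; tauto. Qed.

Lemma tagged_indicator_out {X : Type} (C : X -> Prop) c x : ~ C x -> tagged_indicator C c x = c.
Proof. unfold tagged_indicator. destruct excluded_middle_informative; [tauto|lra]. Qed.

Section TaggedFamily.
Context {X : Type} (P : (X -> R) -> Prop) (x0 : X) (P0 : P (fun _ => 0))
  (W : nat -> X -> Prop) (HW : forall p, P (tagged_indicator (W p) (tag p))).

Definition pw_zero : {f : X -> R | P f} := exist P (fun _ => 0) P0.
Definition tagged_fn (p : nat) : {f : X -> R | P f} :=
  exist P (tagged_indicator (W p) (tag p)) (HW p).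

Lemma tagged_fn_inj p q : tagged_fn p = tagged_fn q -> p = q.
Proof.
  intros E. apply (f_equal (fun g => proj1_sig g x0)) in E. simpl in E.
  apply tag_inj. pose proof (tag_bounds p). pose proof (tag_bounds q).
  unfold tagged_indicator in E. do 2 destruct excluded_middle_informative; lra.
Qed.

Lemma tagged_fn_conv (n : nat) :
  (forall x, eventually (fun k => ~ W (to_nat (n, k)) x)) ->
  set_conv (pw_sub_open P) (fun z => exists k, tagged_fn (to_nat (n, k)) = z) pw_zero.
Proof.
  intros Hout. exists (fun k => tagged_fn (to_nat (n, k))). split; [|split].
  - intros a b E. apply tagged_fn_inj, to_nat_inj in E. congruence.
  - intros z. tauto.
  - intros U HU Uz. destruct (pw_sub_open_basic P U pw_zero HU Uz) as [xs [eps [He Hball]]].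
    destruct (eventually_forall_list xs (fun x k => ~ W (to_nat (n, k)) x)) as [N1 HN1].
    { intros x _. apply Hout. }
    destruct (tag_small eps He) as [N2 HN2].
    exists (Nat.max N1 N2). intros k Hk. apply Hball. intros x Hx. cbn [proj1_sig tagged_fn pw_zero].
    rewrite tagged_indicator_out by (apply (HN1 k); [lia|exact Hx]).
    pose proof (tag_bounds (to_nat (n, k))). pose proof (to_nat_non_decreasing n k).
    assert (Hlt : tag (to_nat (n, k)) < eps) by (apply HN2; lia).
    rewrite Rminus_0_r, Rabs_right; lra.
Qed.

Lemma tagged_fn_conv_escape (B : {f : X -> R | P f} -> Prop) :
  set_conv (pw_sub_open P) B pw_zero ->
  forall x, eventually (fun p => B (tagged_fn p) -> ~ W p x).
Proof.
  intros Hc x.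
  pose proof (set_conv_finite_outside (pw_sub_open P) B pw_zero Hc _
                (pw_sub_open_coord_ball P (fun _ => 0) x (/ 2))) as Hfin.
  simpl in Hfin. rewrite Rminus_diag, Rabs_R0 in Hfin. specialize (Hfin ltac:(lra)).
  destruct (injective_eventually_notin tagged_fn _ tagged_fn_inj Hfin) as [N HN].
  exists N. intros p Hp Bp Wx. apply (HN p Hp). split; auto. simpl.
  rewrite tagged_indicator_in by auto. pose proof (tag_bounds p).
  rewrite Rminus_0_r, Rabs_right; lra.
Qed.

End TaggedFamily.

Lemma stable_from (C : nat -> Prop) (a : nat) :
  (forall m, (a <= m)%nat -> (C m <-> C (S m))) -> forall j, (a <= j)%nat -> (C j <-> C a).
Proof.
  intros H j Hj. induction Hj as [|j Hj IH]; [tauto|]. rewrite <- IH. symmetry. apply H, Hj.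
Qed.

Lemma of_nat_fst_le (p : nat) : (fst (of_nat p) <= p)%nat.
Proof.
  pose proof (to_nat_non_decreasing (fst (of_nat p)) (snd (of_nat p))) as H.
  rewrite <- surjective_pairing, cancel_to_of in H. lia.
Qed.

Section ZeroDimensional.
Context {X : Type} (TX : (X -> Prop) -> Prop) (HT : is_topology TX).

Lemma open_union2 A B : TX A -> TX B -> TX (fun x => A x \/ B x).
Proof.
  intros HA HB. apply (pred_ext _ (fun x => exists U, (U = A \/ U = B) /\ U x)).
  - intros x; split.
    + intros [U [[E|E] HU]]; subst; auto.
    + intros [H|H]; eauto.
  - apply HT. intros U [E|E]; subst; auto.
Qed.

Lemma clopen_true : is_clopen TX (fun _ => True).
Proof.
  split; [apply HT|]. unfold is_closed. apply (pred_ext _ (fun _ => False)); [tauto|apply HT].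
Qed.

Lemma clopen_compl C : is_clopen TX C -> is_clopen TX (fun x => ~ C x).
Proof.
  intros [HC HnC]. split; auto. unfold is_closed. apply (pred_ext _ C); auto. intros x. split; [tauto|apply NNPP].
Qed.

Lemma clopen_union2 A B : is_clopen TX A -> is_clopen TX B -> is_clopen TX (fun x => A x \/ B x).
Proof.
  intros [HA HnA] [HB HnB]. split; [apply open_union2; auto|]. unfold is_closed.
  apply (pred_ext _ (fun x => ~ A x /\ ~ B x)); [intros; tauto|]. apply HT; auto.
Qed.

Lemma clopen_inter2 A B : is_clopen TX A -> is_clopen TX B -> is_clopen TX (fun x => A x /\ B x).
Proof.
  intros HA HB. apply (pred_ext _ (fun x => ~ (~ A x \/ ~ B x))).
  - intros x. destruct (classic (A x)), (classic (B x)); tauto.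
  - apply clopen_compl, clopen_union2; apply clopen_compl; auto.
Qed.

Lemma clopen_xor A B : is_clopen TX A -> is_clopen TX B -> is_clopen TX (fun x => ~ (A x <-> B x)).
Proof.
  intros HA HB. apply (pred_ext _ (fun x => (A x /\ ~ B x) \/ (~ A x /\ B x))).
  - intros x. destruct (classic (A x)), (classic (B x)); tauto.
  - apply clopen_union2; apply clopen_inter2; auto; apply clopen_compl; auto.
Qed.

Lemma clopen_bunion_le (C : nat -> X -> Prop) :
  (forall n, is_clopen TX (C n)) -> forall m, is_clopen TX (fun x => exists n, (n <= m)%nat /\ C n x).
Proof.
  intros HC m. induction m as [|m IH].
  - apply (pred_ext _ (C 0%nat)); auto. intros x; split; [eauto|].
    intros [n [Hn H]]. replace n with 0%nat in H by lia. exact H.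
  - apply (pred_ext _ (fun x => (exists n, (n <= m)%nat /\ C n x) \/ C (S m) x)).
    + intros x; split.
      * intros [[n [Hn H]]|H]; eauto.
      * intros [n [Hn H]]. destruct (Nat.eq_dec n (S m)) as [->|E]; [right; auto|].
        left. exists n. split; auto. lia.
    + apply clopen_union2; auto.
Qed.

Lemma continuous_const (c : R) : continuous_map TX R_open (fun _ => c).
Proof.
  intros V _. destruct (classic (V c)).
  - apply (pred_ext _ (fun _ => True)); [tauto|apply HT].
  - apply (pred_ext _ (fun _ => False)); [tauto|apply HT].
Qed.

Lemma continuous_tagged_indicator C c :
  is_clopen TX C -> continuous_map TX R_open (tagged_indicator C c).
Proof. intros [HC HnC] V _. apply tagged_indicator_preimage; auto; apply HT. Qed.

Hypothesis H1 : alpha1 (pw_sub_open (fun f => continuous_map TX R_open f)).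

Lemma alpha1_Cp_clopen_escape (D : nat -> nat -> X -> Prop) :
  (forall n k, is_clopen TX (D n k)) -> (forall n x, eventually (fun k => ~ D n k x)) ->
  exists h : nat -> nat, forall x, eventually (fun n => forall k, (h n <= k)%nat -> ~ D n k x).
Proof.
  intros HD Hout.
  destruct (classic (inhabited X)) as [[x0]|Hempty].
  2: { exists (fun _ => 0%nat). intros x. destruct (Hempty (inhabits x)). }
  set (P := fun f => continuous_map TX R_open f).
  set (W := fun p => D (fst (of_nat p)) (snd (of_nat p))).
  assert (HWD : forall n k, W (to_nat (n, k)) = D n k).
  { intros n k. unfold W. rewrite cancel_of_to. reflexivity. }
  assert (P0 : P (fun _ => 0)) by apply continuous_const.
  assert (HW : forall p, P (tagged_indicator (W p) (tag p))).
  { intros p. apply continuous_tagged_indicator, HD. }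
  set (F := fun n k => tagged_fn P W HW (to_nat (n, k))).
  destruct (H1 (pw_zero P P0) (fun n z => exists k, F n k = z)) as [B [HBA [Hfin Hc]]].
  { intros n. apply (tagged_fn_conv P x0). intros x.
    apply (eventually_mono _ _ (Hout n x)). intros k. rewrite HWD. auto. }
  assert (Htail : forall n, eventually (fun k => B n (F n k))).
  { intros n. assert (Finj : forall k k', F n k = F n k' -> k = k').
    { intros k k' E. apply (tagged_fn_inj P x0), to_nat_inj in E. congruence. }
    apply (eventually_mono _ _ (injective_eventually_notin _ _ Finj (Hfin n))).
    intros k Hk. apply NNPP. intros nB. apply Hk. split; eauto. }
  destruct (choice _ Htail) as [h Hh].
  exists h. intros x. destruct (tagged_fn_conv_escape P x0 P0 W HW _ Hc x) as [N HN].
  exists N. intros n Hn k Hk. rewrite <- HWD. apply HN.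
  - pose proof (to_nat_non_decreasing n k). lia.
  - exists n. apply Hh, Hk.
Qed.

Definition clopen_approx (C : nat -> X -> Prop) (A : X -> Prop) : Prop :=
  (forall m, is_clopen TX (C m)) /\ forall x, eventually (fun m => C m x <-> A x).

Definition clopen_limit (A : X -> Prop) : Prop := exists C, clopen_approx C A.

Lemma clopen_approx_uniform_index (A : nat -> X -> Prop) (C : nat -> nat -> X -> Prop) :
  (forall n, clopen_approx (C n) (A n)) ->
  exists h : nat -> nat, forall x,
    eventually (fun n => forall k, (h n <= k)%nat -> (C n k x <-> A n x)).
Proof.
  intros HC.
  destruct (alpha1_Cp_clopen_escape (fun n m x => ~ (C n m x <-> C n (S m) x))) as [h Hh].
  - intros n m. apply clopen_xor; apply HC.
  - intros n x. destruct (proj2 (HC n) x) as [N HN]. exists N. intros m Hm Hchange.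
    apply Hchange. rewrite (HN m Hm), (HN (S m)) by lia. tauto.
  - exists h. intros x. apply (eventually_mono _ _ (Hh x)). intros n Hstable k Hk.
    assert (Hconst : forall j, (h n <= j)%nat -> (C n j x <-> C n (h n) x)).
    { apply (stable_from (fun j => C n j x)). intros m Hm. apply NNPP, Hstable, Hm. }
    destruct (proj2 (HC n) x) as [N HN].
    rewrite (Hconst k Hk), <- (Hconst (Nat.max N (h n))) by lia. apply HN. lia.
Qed.

Lemma clopen_limit_cunion (A : nat -> X -> Prop) :
  (forall n, clopen_limit (A n)) -> clopen_limit (fun x => exists n, A n x).
Proof.
  intros HA. destruct (choice _ HA) as [C HC].
  destruct (clopen_approx_uniform_index A C HC) as [h Hh].
  exists (fun m x => exists n, (n <= m)%nat /\ C n (Nat.max m (h n)) x). split.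
  - intros m. apply clopen_bunion_le. intros n. apply HC.
  - intros x. destruct (classic (exists n, A n x)) as [[n0 Hn0]|HnA].
    + destruct (proj2 (HC n0) x) as [N HN].
      exists (Nat.max n0 N). intros m Hm. split; [eauto|]. intros _.
      exists n0. split; [lia|]. apply HN; [lia|exact Hn0].
    + destruct (Hh x) as [N HN].
      destruct (eventually_forall_lt N (fun n m => ~ C n m x)) as [K HK].
      { intros n _. apply (eventually_mono _ _ (proj2 (HC n) x)).
        intros m Hm Cx. apply HnA. exists n. apply Hm, Cx. }
      exists K. intros m Hm. split; [|tauto]. intros [n [Hnm Cx]].
      destruct (Nat.lt_ge_cases n N) as [HnN|HnN].
      * exfalso. exact (HK (Nat.max m (h n)) ltac:(lia) n HnN Cx).
      * exists n. apply (HN n HnN (Nat.max m (h n))); [lia|exact Cx].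
Qed.

Lemma clopen_limit_of_clopen A : is_clopen TX A -> clopen_limit A.
Proof. intros HA. exists (fun _ => A). split; auto. intros x. exists 0%nat. tauto. Qed.

Lemma clopen_limit_sigma_algebra : is_sigma_algebra clopen_limit.
Proof.
  split; [|split].
  - apply clopen_limit_of_clopen, clopen_true.
  - intros A [C [HC Hx]]. exists (fun m x => ~ C m x). split.
    + intros m. apply clopen_compl, HC.
    + intros x. apply (eventually_mono _ _ (Hx x)). intros m Hm. rewrite Hm. tauto.
  - apply clopen_limit_cunion.
Qed.

Hypothesis Hcl : open_countable_union_clopen TX.

Lemma borel_clopen_limit A : borel TX A -> clopen_limit A.
Proof.
  intros HA. apply HA; [apply clopen_limit_sigma_algebra|].
  intros U HU. destruct (Hcl U HU) as [C [HC HUC]].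
  apply (pred_ext _ (fun x => exists n, C n x)); [intros x; rewrite HUC; tauto|].
  apply clopen_limit_cunion. intros n. apply clopen_limit_of_clopen, HC.
Qed.

Lemma borel_family_clopen_diagonal (A : nat -> X -> Prop) :
  (forall p, borel TX (A p)) ->
  exists V : nat -> X -> Prop,
    (forall p, is_clopen TX (V p)) /\ forall x, eventually (fun p => V p x <-> A p x).
Proof.
  intros HA. destruct (choice _ (fun p => borel_clopen_limit (A p) (HA p))) as [C HC].
  destruct (clopen_approx_uniform_index A C HC) as [h Hh].
  exists (fun p => C p (h p)). split; [intros p; apply HC|].
  intros x. apply (eventually_mono _ _ (Hh x)). intros p Hp. apply Hp. lia.
Qed.

Lemma alpha1_Cp_bounded : borel_images_bounded TX.
Proof.
  intros Psi HPsi.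
  destruct (borel_family_clopen_diagonal
              (fun p x => (snd (of_nat p) < Psi x (fst (of_nat p)))%nat)) as [V [HV HVA]].
  { intros p. apply (HPsi (fun g => (snd (of_nat p) < g (fst (of_nat p)))%nat)).
    apply (baire_open_initial_segment _ (S (fst (of_nat p)))).
    intros g g' Hgg' Hg. rewrite <- Hgg'; auto. }
  assert (HVpair : forall x, exists P0, forall n k,
             (P0 <= to_nat (n, k))%nat -> (V (to_nat (n, k)) x <-> (k < Psi x n)%nat)).
  { intros x. destruct (HVA x) as [P0 HP0]. exists P0. intros n k Hnk.
    rewrite (HP0 _ Hnk), cancel_of_to. reflexivity. }
  destruct (alpha1_Cp_clopen_escape (fun n k => V (to_nat (n, k)))) as [h Hh].
  - intros n k. apply HV.
  - intros n x. destruct (HVpair x) as [P0 HP0]. exists (Nat.max P0 (Psi x n)).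
    intros k Hk HVk. pose proof (to_nat_non_decreasing n k).
    apply HP0 in HVk; lia.
  - exists (fun n => Nat.max (h n) n). intros f [x <-].
    destruct (Hh x) as [N HN]. destruct (HVpair x) as [P0 HP0].
    exists (Nat.max N P0). intros n Hn. apply Nat.nlt_ge. intros Hlt.
    pose proof (to_nat_non_decreasing n (Nat.max (h n) n)).
    apply (HN n ltac:(lia) (Nat.max (h n) n) ltac:(lia)), HP0; [lia|exact Hlt].
Qed.

End ZeroDimensional.

Lemma alpha4_Bp_bounded {X : Type} (TX : (X -> Prop) -> Prop) :
  alpha4 (pw_sub_open (fun f => borel_measurable TX R_open f)) -> borel_images_bounded TX.
Proof.
  intros H4 Psi HPsi.
  destruct (classic (inhabited X)) as [[x0]|Hempty].
  2: { exists (fun _ => 0%nat). intros f [x _]. destruct (Hempty (inhabits x)). }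
  set (P := fun f => borel_measurable TX R_open f).
  set (W := fun p x => exists i, (i <= fst (of_nat p))%nat /\ (snd (of_nat p) <= Psi x i)%nat).
  assert (P0 : P (fun _ => 0)) by (intros V _; apply borel_const).
  assert (HWb : forall p, borel TX (W p)).
  { intros p. apply (HPsi (fun g => exists i, (i <= fst (of_nat p))%nat /\ (snd (of_nat p) <= g i)%nat)).
    apply (baire_open_initial_segment _ (S (fst (of_nat p)))).
    intros g g' Hgg' [i [Hi Hk]]. exists i. rewrite <- Hgg' by lia. auto. }
  assert (HW : forall p, P (tagged_indicator (W p) (tag p))).
  { intros p V _. apply tagged_indicator_preimage;
      auto using borel_true, borel_false, borel_compl. }
  destruct (H4 (pw_zero P P0) (fun n z => exists k, tagged_fn P W HW (to_nat (n, k)) = z))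
    as [B [Hc HB]].
  { intros n. apply (tagged_fn_conv P x0). intros x.
    apply (eventually_mono _ _ (eventually_forall_lt (S n) (fun i k => Psi x i < k)%nat
                                  (fun i _ => ex_intro _ (S (Psi x i)) (fun k Hk => Hk)))).
    intros k Hk [i [Hi Hik]]. rewrite cancel_of_to in Hi, Hik. specialize (Hk i). simpl in *. lia. }
  assert (Hpick : forall m, exists p, (m <= fst (of_nat p))%nat /\ B (tagged_fn P W HW p)).
  { intros m. destruct (HB m) as [n [Hn [z [Bz [k <-]]]]].
    exists (to_nat (n, k)). rewrite cancel_of_to. auto. }
  destruct (choice _ Hpick) as [pick Hpicked].
  exists (fun m => snd (of_nat (pick m))). intros f [x <-].
  destruct (tagged_fn_conv_escape P x0 P0 W HW B Hc x) as [N HN].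
  exists N. intros m Hm. destruct (Hpicked m) as [Hmp Bp].
  apply Nat.nlt_ge. intros Hlt. apply (HN (pick m)); auto.
  - pose proof (of_nat_fst_le (pick m)). lia.
  - exists m. split; [exact Hmp|lia].
Qed.

Theorem mainTheorem9 (X : Type) (TX : (X -> Prop) -> Prop)
  (HT : is_topology TX) (Hcl : open_countable_union_clopen TX) :
  (borel_images_bounded TX <-> alpha1 (Cp_open TX)) /\
  (borel_images_bounded TX <-> alpha1 (Bp_open TX)) /\
  (borel_images_bounded TX <-> alpha2 (Bp_open TX)) /\
  (borel_images_bounded TX <-> alpha3 (Bp_open TX)) /\
  (borel_images_bounded TX <-> alpha4 (Bp_open TX)).
Proof.
  assert (Hbd_Cp : borel_images_bounded TX -> alpha1 (Cp_open TX)).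
  { apply bounded_alpha1. intros f Hf V HV. apply borel_open, Hf, HV. }
  assert (Hbd_Bp : borel_images_bounded TX -> alpha1 (Bp_open TX)).
  { apply bounded_alpha1. auto. }
  assert (H4_bd : alpha4 (Bp_open TX) -> borel_images_bounded TX) by apply alpha4_Bp_bounded.
  repeat split; intros H.
  - auto.
  - apply (alpha1_Cp_bounded TX HT); auto.
  - auto.
  - apply H4_bd, alpha3_alpha4, alpha1_alpha3, H.
  - apply alpha1_alpha2, Hbd_Bp, H.
  - apply H4_bd, alpha2_alpha4, H.
  - apply alpha1_alpha3, Hbd_Bp, H.
  - apply H4_bd, alpha3_alpha4, H.
  - apply alpha3_alpha4, alpha1_alpha3, Hbd_Bp, H.
  - apply H4_bd, H.
Qed.
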